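(* Let $G=(G_1,v_1,e_1)\Delta(G_2,v_2,e_2)$ be a Hajós join of two hypergraphs $G_1$ and $G_2$, and let $k\ge2$ be an integer. Then: (a) if both $G_1$ and $G_2$ are $(k+1)$-critical, then $G$ is $(k+1)$-critical; (b) if $G$ is $(k+1)$-critical and $k\ge3$, then both $G_1$ and $G_2$ are $(k+1)$-critical.
   Context: A hypergraph is a pair $G=(V,E)$ of finite sets with $E\subseteq 2^V$ and $|e|\ge2$ for all $e\in E$. A coloring requires every edge to contain two vertices of different colors; $\chi$ is the chromatic number. $G$ is $(k+1)$-critical if $\chi(G)=k+1$ but $\chi(H)\le k$ for every proper subhypergraph $H$. Hajós join $(G_1,v_1,e_1)\Delta(G_2,v_2,e_2)$: for vertex-disjoint hypergraphs $G_1,G_2$, $e_i\in E(G_i)$, $v_i\in e_i$, delete $e_1,e_2$, identify $v_1,v_2$ into a new vertex $v^*$, and add a new edge $e^*$ equal either to $(e_1\cup e_2)\setminus\{v_1,v_2\}$ or to $((e_1\cup e_2)\setminus\{v_1,v_2\})\cup\{v^*\}$. *)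

From mathcomp Require Import all_boot.
Local Open Scope nat_scope.
Set Implicit Arguments. Unset Strict Implicit. Unset Printing Implicit Defensive.

Definition hgraph (T : finType) := ({set T} * {set {set T}})%type.

Section Hyper.
Variable T : finType.

Definition is_hypergraph (G : hgraph T) : Prop :=
  (forall e, e \in G.2 -> e \subset G.1) /\ (forall e, e \in G.2 -> 2 <= #|e|).

Definition colorable (G : hgraph T) (k : nat) : Prop :=
  exists f : T -> nat,
    (forall x, x \in G.1 -> f x < k) /\
    (forall e, e \in G.2 -> exists x, exists y, [/\ x \in e, y \in e & f x != f y]).

Definition chi_eq (G : hgraph T) (n : nat) : Prop :=
  colorable G n /\ forall m, m < n -> ~ colorable G m.

Definition subhypergraph (H G : hgraph T) : Prop :=
  is_hypergraph H /\ H.1 \subset G.1 /\ H.2 \subset G.2.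

(* G is (k+1)-critical: chi(G) = k+1 and chi(H) <= k for every proper
   subhypergraph H (chi(H) <= k  <=>  H is k-colorable). *)
Definition critical (G : hgraph T) (k : nat) : Prop :=
  chi_eq G k.+1 /\
  forall H, subhypergraph H G -> H <> G -> colorable H k.

(* Hajós join.  v1 and v2 are identified into the new vertex vs
   (vs must not be another vertex of G1 or G2; vs = v1 is allowed).
   b = false : e* = (e1 ∪ e2) \ {v1,v2};  b = true : e* additionally contains vs. *)
Definition hajos_rename (v1 v2 vs : T) (x : T) : T :=
  if (x == v1) || (x == v2) then vs else x.

Definition hajos_join (G1 G2 : hgraph T) (v1 v2 vs : T) (e1 e2 : {set T})
    (b : bool) : hgraph T :=
  let r := hajos_rename v1 v2 vs in
  let estar0 := (e1 :|: e2) :\: [set v1; v2] in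
  let estar := if b then vs |: estar0 else estar0 in
  (vs |: ((G1.1 :\ v1) :|: (G2.1 :\ v2)),
   (fun e : {set T} => r @: e) @: (G1.2 :\ e1) :|: (fun e : {set T} => r @: e) @: (G2.2 :\ e2)
     :|: [set estar]).

Definition hajos_data (G1 G2 : hgraph T) (v1 v2 vs : T) (e1 e2 : {set T}) : Prop :=
  is_hypergraph G1 /\ is_hypergraph G2 /\ [disjoint G1.1 & G2.1] /\
  e1 \in G1.2 /\ e2 \in G2.2 /\ v1 \in e1 /\ v2 \in e2 /\
  vs \notin (G1.1 :\ v1) :|: (G2.1 :\ v2).

End Hyper.

From mathcomp Require Import all_boot zify.
Set Implicit Arguments. Unset Strict Implicit. Unset Printing Implicit Defensive.

(* A hypergraph G is (k+1)-critical iff it is not k-colorable, every G - e is k-colorable,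
   and it has no isolated vertex.  Let r be the renaming v1, v2 |-> vs of the join J.
   (a) A k-coloring c of J pulls back along r to k-colorings of G1 - e1 and G2 - e2; as
   neither G_i is k-colorable, e1 and e2 are monochromatic under c o r, with the color of
   vs, hence so is e*.  Conversely, colorings of G1 - f and of G2 - e2, permuted so as to
   agree on v1 and v2, glue into a coloring of J - r(f): the edge e* gets two colors
   because e2 is monochromatic in G2 - e2 while e1 is not.
   (b) If G1 were k-colorable, permute its colors so that v1 gets the color of vs in a
   coloring of J - e* and some x in e1 - v1 avoids the color of a vertex of e2 - v2 (this
   needs a third color); gluing with the pullback on G2 then colors J.  The criticality
   of G1 is obtained by pulling back colorings of J - r(f) or J - e*; there e1 keeps two
   colors because G2, by the previous argument, is not k-colorable either. *)

Definition cswap (a b i : nat) := if i == a then b else if i == b then a else i.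

Lemma cswapK a b : involutive (cswap a b).
Proof.
move=> i; rewrite /cswap.
have [-> | ia] := eqVneq i a; first by rewrite eqxx; case: eqVneq.
have [-> | ib] := eqVneq i b; first by rewrite eqxx.
by rewrite (negbTE ia) (negbTE ib).
Qed.

Lemma cswap_inj a b : injective (cswap a b).
Proof. exact: inv_inj (cswapK a b). Qed.

Lemma cswapL a b : cswap a b a = b.
Proof. by rewrite /cswap eqxx. Qed.

Lemma cswap_id a b i : i != a -> i != b -> cswap a b i = i.
Proof. by move=> ia ib; rewrite /cswap (negbTE ia) (negbTE ib). Qed.

Lemma cswap_ltn a b k i : a < k -> b < k -> i < k -> cswap a b i < k.
Proof. by rewrite /cswap => ak bk ik; case: ifP => _ //; case: ifP. Qed.

Lemma exists_third_color k a b : 2 < k -> exists2 g, g < k & (g != a) && (g != b).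
Proof.
move=> k_gt2; have [|ab0] := boolP ((0 != a) && (0 != b)); first by exists 0; lia.
have [|ab1] := boolP ((1 != a) && (1 != b)); first by exists 1; lia.
by exists 2; lia.
Qed.

Lemma exists_recoloring k p q a w :
  2 < k -> p < k -> q < k -> a < k -> p != q ->
  exists h : nat -> nat, [/\ injective h, forall i, i < k -> h i < k, h p = a & h q != w].
Proof.
move=> k_gt2 pk qk ak pq; set s := cswap p a.
have sqa : s q != a by rewrite -(cswapL p a) (inj_eq (@cswap_inj _ _)) eq_sym.
have [g gk /andP [ga gw]] := exists_third_color a w k_gt2.
exists (cswap (s q) g \o s); split=> /=.
- exact: inj_comp (@cswap_inj _ _) (@cswap_inj _ _).
- by move=> i ik; rewrite !cswap_ltn.
- by rewrite /s cswapL cswap_id // eq_sym.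
- by rewrite cswapL.
Qed.

Section Colorings.
Variable T : finType.
Implicit Types (G H : hgraph T) (c : T -> nat) (e : {set T}) (k : nat).

Definition bichromatic c e := [exists x in e, exists y in e, c x != c y].

Lemma bichromaticP c e :
  reflect (exists x y, [/\ x \in e, y \in e & c x != c y]) (bichromatic c e).
Proof.
apply: (iffP exists_inP) => [[x xe /exists_inP [y ye cxy]]|[x [y [xe ye cxy]]]].
  by exists x, y.
by exists x => //; apply/exists_inP; exists y.
Qed.

Lemma eq_in_bichromatic c c' e : {in e, c =1 c'} -> bichromatic c e = bichromatic c' e.
Proof.
move=> eq_c; apply: eq_existsb => x; case xe: (x \in e) => //=.
by apply: eq_existsb => y; case ye: (y \in e); rewrite //= !eq_c.
Qed.

Lemma bichromatic_imset c (h : T -> T) e : bichromatic c (h @: e) = bichromatic (c \o h) e.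
Proof.
apply/bichromaticP/bichromaticP => [[_ [_ [/imsetP [x xe ->] /imsetP [y ye ->] cxy]]]|].
  by exists x, y.
by move=> [x [y [xe ye cxy]]]; exists (h x), (h y); rewrite !imset_f.
Qed.

Lemma bichromatic_comp (h : nat -> nat) c e :
  injective h -> bichromatic (h \o c) e = bichromatic c e.
Proof.
move=> inj_h; apply: eq_existsb => x; congr (_ && _).
by apply: eq_existsb => y; rewrite /= (inj_eq inj_h).
Qed.

Lemma not_bichromatic_eq c e : ~~ bichromatic c e -> {in e &, forall x y, c x = c y}.
Proof.
move=> mono x y xe ye; apply/eqP; apply: contraNT mono => cxy.
by apply/bichromaticP; exists x, y.
Qed.

Lemma bichromatic_neq c e v : bichromatic c e -> exists2 x, x \in e & c x != c v.
Proof.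
case/bichromaticP => x [y [xe ye cxy]].
have [cxv|] := eqVneq (c x) (c v); last by exists x.
by exists y; rewrite // -cxv eq_sym.
Qed.

Lemma edge_other_vertex G e v :
  is_hypergraph G -> e \in G.2 -> exists2 x, x \in e & x != v.
Proof.
move=> [_ big] eG; have /card_gt0P [x] : 0 < #|e :\ v|.
  by move: (big e eG); rewrite (cardsD1 v); case: (v \in e) => /=; lia.
by rewrite !inE => /andP [xv xe]; exists x.
Qed.

Definition coloring G k c :=
  {in G.1, forall x, c x < k} /\ {in G.2, forall e, bichromatic c e}.

Lemma colorableP G k : colorable G k <-> exists c, coloring G k c.
Proof.
by split=> [[c [cb ce]]|[c [cb ce]]]; exists c; split=> // e /ce /bichromaticP.
Qed.

Lemma coloring_recolor G k c (h : nat -> nat) :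
  injective h -> (forall i, i < k -> h i < k) -> coloring G k c -> coloring G k (h \o c).
Proof.
by move=> inj_h hk [cb ce]; split=> [x /cb /hk //|e /ce]; rewrite bichromatic_comp.
Qed.

Lemma coloring_at H k c v a :
  coloring H k c -> v \in H.1 -> a < k -> coloring H k (cswap (c v) a \o c).
Proof.
move=> col vH ak; apply: (coloring_recolor _ _ col); first exact: cswap_inj.
by move=> i ik; rewrite cswap_ltn // col.1.
Qed.

Lemma colorable_sub G H k k' :
  colorable G k -> H.1 \subset G.1 -> H.2 \subset G.2 -> k <= k' -> colorable H k'.
Proof.
move=> [c [cb ce]] /subsetP sV /subsetP sE le_k; exists c; split=> [x /sV /cb|e /sE /ce //].
by move/leq_trans; apply.
Qed.

Definition del_edge G e : hgraph T := (G.1, G.2 :\ e).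

Lemma deleted_edge_monochromatic G e k c :
  ~ colorable G k -> coloring (del_edge G e) k c -> ~~ bichromatic c e.
Proof.
move=> ncol [cb ce]; apply/negP => ce'; apply: ncol; apply/colorableP; exists c.
by split=> // f fG; have [->//|fe] := eqVneq f e; apply: ce; rewrite !inE fe.
Qed.

Lemma colorable_del_edge G e k :
  is_hypergraph G -> e \in G.2 -> colorable (del_edge G e) k -> colorable G k.+1.
Proof.
move=> [subV big] eG /colorableP [c [cb ce]].
have /card_gt0P [u ue] : 0 < #|e| by apply: leq_trans (big e eG).
apply/colorableP; exists (fun x => if x == u then k else c x); split=> [x xV|f fG].
  by case: eqP => // _; apply: ltnW (cb x xV).
have [uf|uNf] := boolP (u \in f).
  have [w wf wu] := edge_other_vertex u (conj subV big) fG.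
  apply/bichromaticP; exists u, w; rewrite eqxx (negbTE wu) neq_ltn cb ?orbT //.
  exact: subsetP (subV f fG) w wf.
have fe : f != e by apply: contraNneq uNf => ->.
rewrite -(eq_in_bichromatic (c := c)) ?ce ?inE ?fe //.
by move=> x xf; case: eqP => // xu; rewrite -xu xf in uNf.
Qed.

Definition edge_critical G k := forall e, e \in G.2 -> colorable (del_edge G e) k.

Definition no_isolated G := forall x, x \in G.1 -> exists2 e, e \in G.2 & x \in e.

Lemma subhypergraph_del_edge G e : is_hypergraph G -> subhypergraph (del_edge G e) G.
Proof.
move=> [subV big]; split; last by split; [apply: subxx | apply: subsetDl].
by split=> f /setD1P [_ fG]; [apply: subV | apply: big].
Qed.

Lemma subhypergraph_del_vertex G x :
  is_hypergraph G -> (forall e, e \in G.2 -> x \notin e) ->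
  subhypergraph (G.1 :\ x, G.2) G.
Proof.
move=> [subV big] xN; split; last by split; [apply: subsetDl | apply: subxx].
split=> // e eG; apply/subsetP => y ye; rewrite !inE (subsetP (subV e eG)) // andbT.
by apply: contraNneq (xN e eG) => <-.
Qed.

Lemma colorable_add_vertex G x k :
  0 < k -> (forall e, e \in G.2 -> x \notin e) -> colorable (G.1 :\ x, G.2) k ->
  colorable G k.
Proof.
move=> k_gt0 xN /colorableP [c [cb ce]].
apply/colorableP; exists (fun y => if y == x then 0 else c y); split=> [y yV|e eG].
  by case: eqP => // /eqP yx; apply: cb; rewrite !inE yx.
rewrite -(eq_in_bichromatic (c := c)) ?ce // => y ye.
by case: eqP => // yx; move: (xN e eG); rewrite -yx ye.
Qed.

Lemma critical_of_edge_critical G k :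
  is_hypergraph G -> ~ colorable G k -> edge_critical G k -> no_isolated G -> critical G k.
Proof.
move=> hypG ncol ecrit niso; split; first split.
- have [noE|/set0Pn [e eG]] := eqVneq G.2 set0.
    by exists (fun _ => 0); split=> // e; rewrite noE inE.
  exact: colorable_del_edge hypG eG (ecrit e eG).
- by move=> m lt_mk colm; apply: ncol; apply: colorable_sub colm _ _ lt_mk.
move=> H [hypH [subV subE]] neqHG.
have [eqE|neqE] := eqVneq H.2 G.2.
  have /subsetPn [x xG xNH] : ~~ (G.1 \subset H.1).
    apply: contra_notN neqHG => supV.
    by rewrite [H]surjective_pairing [G]surjective_pairing eqE; congr pair; apply/eqP;
      rewrite eqEsubset subV.
  have [e eG xe] := niso x xG; rewrite -eqE in eG.
  by rewrite (subsetP (hypH.1 e eG)) in xNH.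
have /subsetPn [e eG eNH] : ~~ (G.2 \subset H.2).
  by apply: contraNN neqE => supE; rewrite eqEsubset subE.
apply: colorable_sub (ecrit e eG) subV _ (leqnn k).
by apply/subsetP => f fH; rewrite !inE (subsetP subE) // andbT; apply: contraNneq eNH => <-.
Qed.

Lemma critical_char G k :
  is_hypergraph G -> 0 < k ->
  critical G k <-> [/\ ~ colorable G k, edge_critical G k & no_isolated G].
Proof.
move=> hypG k_gt0; split=> [[[_ chi] crit]|[]]; last exact: critical_of_edge_critical.
have ncol := chi k (ltnSn k); split=> // [e eG|x xG].
  apply: crit (subhypergraph_del_edge e hypG) _.
  by move/(congr1 snd)/setP/(_ e); rewrite !inE eqxx eG.
have [/exists_inP [e eG xe]|noedge] := boolP [exists e in G.2, x \in e]; first by exists e.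
have xN e : e \in G.2 -> x \notin e.
  by move=> eG; apply: contra noedge => xe; apply/exists_inP; exists e.
case: ncol; apply: (colorable_add_vertex k_gt0 xN).
apply: crit (subhypergraph_del_vertex hypG xN) _.
by move/(congr1 fst)/setP/(_ x); rewrite !inE eqxx xG.
Qed.

(* Otherwise [v] could be recolored away from the color of another vertex of [e]. *)
Lemma critical_vertex_in_two_edges G k e v :
  is_hypergraph G -> 1 < k -> critical G k -> e \in G.2 -> v \in e ->
  exists2 f, f \in G.2 & (f != e) && (v \in f).
Proof.
move=> hypG k_gt1 crit eG ve; have [ncol ecrit _] := (critical_char hypG (ltnW k_gt1)).1 crit.
have [/exists_inP [f fG vf]|vN] := boolP [exists f in G.2, (f != e) && (v \in f)].
  by exists f.
case: ncol; have /colorableP [c [cb ce]] := ecrit e eG.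
have [u ue uv] := edge_other_vertex v hypG eG.
set c' := fun y => if y == v then (if c u == 0 then 1 else 0) else c y.
apply/colorableP; exists c'; split=> [y yV|f fG].
  rewrite /c'; case: eqP => _; last exact: cb.
  by case: ifP => _; [exact: k_gt1 | exact: ltnW k_gt1].
have [-> |fe] := eqVneq f e.
  apply/bichromaticP; exists v, u; rewrite /c' eqxx (negbTE uv).
  by split=> //; case: (c u) => [|[]].
have vNf : v \notin f by apply: contra vN => vf; apply/exists_inP; exists f; rewrite ?fe.
rewrite /c' -(eq_in_bichromatic (c := c)) ?ce ?inE ?fe // => y yf.
by case: eqP => // yv; rewrite -yv yf in vNf.
Qed.
End Colorings.

Section HajosRename.
Variables (T : finType) (v1 v2 vs : T).
Local Notation r := (hajos_rename v1 v2 vs).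

Lemma hajos_rename_v1 : r v1 = vs.
Proof. by rewrite /hajos_rename eqxx. Qed.

Lemma hajos_rename_v2 : r v2 = vs.
Proof. by rewrite /hajos_rename eqxx orbT. Qed.

Lemma hajos_rename_id x : x != v1 -> x != v2 -> r x = x.
Proof. by rewrite /hajos_rename => /negbTE -> /negbTE ->. Qed.

Lemma hajos_rename_on (A : {set T}) x :
  v2 \notin A -> x \in A -> r x = if x == v1 then vs else x.
Proof.
move=> v2N xA; case: eqP => [->|/eqP xv1]; first exact: hajos_rename_v1.
by apply: hajos_rename_id xv1 _; apply: contraNneq v2N => <-.
Qed.

Lemma hajos_rename_inj (A : {set T}) :
  v2 \notin A -> vs \notin A :\ v1 -> {in A &, injective r}.
Proof.
move=> v2N vsN x y xA yA; rewrite !(hajos_rename_on v2N) //.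
have vs_neq z : z \in A -> z != v1 -> vs != z.
  by move=> zA zv1; apply: contraNneq vsN => ->; rewrite !inE zv1 zA.
case: eqVneq => [->|xv1]; case: eqVneq => [->|yv1] // /eqP.
  by rewrite (negbTE (vs_neq y yA yv1)).
by rewrite eq_sym (negbTE (vs_neq x xA xv1)).
Qed.

Definition hajos_edge (e1 e2 : {set T}) (b : bool) : {set T} :=
  if b then vs |: ((e1 :|: e2) :\: [set v1; v2]) else (e1 :|: e2) :\: [set v1; v2].

Lemma mem_hajos_edge e1 e2 b x :
  x \in e1 :|: e2 -> x != v1 -> x != v2 -> x \in hajos_edge e1 e2 b.
Proof.
move=> xe xv1 xv2; have x0 : x \in (e1 :|: e2) :\: [set v1; v2].
  by rewrite !inE (negbTE xv1) (negbTE xv2) -in_setU.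
by rewrite /hajos_edge; case: b; rewrite ?in_setU1 x0 ?orbT.
Qed.

Lemma hajos_edge_cases e1 e2 b x :
  x \in hajos_edge e1 e2 b -> x = vs \/ [/\ x \in e1 :|: e2, x != v1 & x != v2].
Proof.
have cases0 : x \in (e1 :|: e2) :\: [set v1; v2] -> [/\ x \in e1 :|: e2, x != v1 & x != v2].
  by rewrite !inE negb_or => /andP [/andP [xv1 xv2] xe].
by rewrite /hajos_edge; case: b => [/setU1P [|/cases0]|/cases0]; [left | right | right].
Qed.

Variables (G1 G2 : hgraph T) (e1 e2 : {set T}) (b : bool).
Local Notation J := (hajos_join G1 G2 v1 v2 vs e1 e2 b).

Lemma hajos_join_vertices : J.1 = vs |: ((G1.1 :\ v1) :|: (G2.1 :\ v2)).
Proof. by []. Qed.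

Lemma hajos_join_edges :
  J.2 = [set r @: f | f : {set T} in G1.2 :\ e1] :|: [set r @: f | f : {set T} in G2.2 :\ e2]
        :|: [set hajos_edge e1 e2 b].
Proof. by []. Qed.

Lemma hajos_join_edgeP e :
  e \in J.2 ->
  [\/ exists2 f, f \in G1.2 :\ e1 & e = r @: f,
      exists2 f, f \in G2.2 :\ e2 & e = r @: f | e = hajos_edge e1 e2 b].
Proof.
rewrite hajos_join_edges !inE => /orP [/orP [/imsetP [f fG ->]|/imsetP [f fG ->]]|/eqP ->].
- by apply: Or31; exists f.
- by apply: Or32; exists f.
- exact: Or33.
Qed.

Lemma renamed_edge1_in_join f : f \in G1.2 :\ e1 -> r @: f \in J.2.
Proof. by move=> fG; rewrite hajos_join_edges !inE imset_f. Qed.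

Lemma renamed_edge2_in_join f : f \in G2.2 :\ e2 -> r @: f \in J.2.
Proof. by move=> fG; rewrite hajos_join_edges !inE; apply/orP; left; rewrite orbC imset_f. Qed.

Lemma hajos_edge_in_join : hajos_edge e1 e2 b \in J.2.
Proof. by rewrite hajos_join_edges !inE eqxx orbT. Qed.

Lemma hajos_rename_in_join x : x \in G1.1 :|: G2.1 -> r x \in J.1.
Proof.
rewrite hajos_join_vertices inE /hajos_rename => xG.
case: ifP => [_|/norP [xv1 xv2]]; first exact: setU11.
by rewrite !inE xv1 xv2; case/orP: xG => ->; rewrite ?orbT.
Qed.
End HajosRename.

Arguments hajos_edge_in_join {T v1 v2 vs G1 G2 e1 e2 b}.

Section HajosSymmetry.
Variables (T : finType) (G1 G2 : hgraph T) (v1 v2 vs : T) (e1 e2 : {set T}) (b : bool).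

Lemma hajos_rename_sym : hajos_rename v1 v2 vs =1 hajos_rename v2 v1 vs.
Proof. by move=> x; rewrite /hajos_rename orbC. Qed.

Lemma hajos_edge_sym : hajos_edge v1 v2 vs e1 e2 b = hajos_edge v2 v1 vs e2 e1 b.
Proof. by rewrite /hajos_edge (setUC e1) (setUC [set v1]). Qed.

Lemma hajos_join_sym :
  hajos_join G1 G2 v1 v2 vs e1 e2 b = hajos_join G2 G1 v2 v1 vs e2 e1 b.
Proof.
have r_sym : (fun f : {set T} => hajos_rename v1 v2 vs @: f) =1
             (fun f => hajos_rename v2 v1 vs @: f).
  by move=> f; apply: eq_imset; apply: hajos_rename_sym.
rewrite [LHS]surjective_pairing [RHS]surjective_pairing.
rewrite !hajos_join_vertices !hajos_join_edges !(eq_imset _ r_sym) hajos_edge_sym.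
by rewrite (setUC (G1.1 :\ v1)) (setUC [set _ | _ in G2.2 :\ e2]).
Qed.

Lemma hajos_data_sym :
  hajos_data G1 G2 v1 v2 vs e1 e2 -> hajos_data G2 G1 v2 v1 vs e2 e1.
Proof.
move=> [hyp1 [hyp2 [disj [e1G [e2G [v1e1 [v2e2 vsN]]]]]]].
by rewrite /hajos_data disjoint_sym setUC.
Qed.
End HajosSymmetry.

Section HajosData.
Variables (T : finType) (G1 G2 : hgraph T) (v1 v2 vs : T) (e1 e2 : {set T}) (b : bool).
Hypothesis D : hajos_data G1 G2 v1 v2 vs e1 e2.
Local Notation r := (hajos_rename v1 v2 vs).
Local Notation J := (hajos_join G1 G2 v1 v2 vs e1 e2 b).
Local Notation estar := (hajos_edge v1 v2 vs e1 e2 b).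
Implicit Types (f g : {set T}) (x y : T).

Let hyp1 : is_hypergraph G1 := D.1.
Let hyp2 : is_hypergraph G2 := D.2.1.
Let disjG : [disjoint G1.1 & G2.1] := D.2.2.1.
Let e1G : e1 \in G1.2 := D.2.2.2.1.
Let e2G : e2 \in G2.2 := D.2.2.2.2.1.
Let v1e1 : v1 \in e1 := D.2.2.2.2.2.1.
Let v2e2 : v2 \in e2 := D.2.2.2.2.2.2.1.
Let vs_fresh : vs \notin (G1.1 :\ v1) :|: (G2.1 :\ v2) := D.2.2.2.2.2.2.2.

Let sub1 f : f \in G1.2 -> f \subset G1.1 := hyp1.1 f.
Let sub2 f : f \in G2.2 -> f \subset G2.1 := hyp2.1 f.
Let v1G1 : v1 \in G1.1 := subsetP (sub1 e1G) v1 v1e1.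
Let v2G2 : v2 \in G2.1 := subsetP (sub2 e2G) v2 v2e2.
Let v2N1 : v2 \notin G1.1 := negbT (disjointFl disjG v2G2).
Let v1N2 : v1 \notin G2.1 := negbT (disjointFr disjG v1G1).

Let vsN1 : vs \notin G1.1 :\ v1.
Proof. by move: vs_fresh; rewrite inE negb_or => /andP []. Qed.

Let vsN2 : vs \notin G2.1 :\ v2.
Proof. by move: vs_fresh; rewrite inE negb_or => /andP []. Qed.

Let rename1 x : x \in G1.1 -> r x = if x == v1 then vs else x.
Proof. exact: (hajos_rename_on _ _ v2N1). Qed.

Let rename2 x : x \in G2.1 -> r x = if x == v2 then vs else x.
Proof. by rewrite hajos_rename_sym; apply: (hajos_rename_on _ _ v1N2). Qed.

Let rename_fixed1 x : x \in G1.1 -> x != v1 -> r x = x.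
Proof. by move=> xG xv1; rewrite rename1 // (negbTE xv1). Qed.

Let rename_fixed2 x : x \in G2.1 -> x != v2 -> r x = x.
Proof. by move=> xG xv2; rewrite rename2 // (negbTE xv2). Qed.

Let rename_inj1 : {in G1.1 &, injective r}.
Proof. exact: (hajos_rename_inj v2N1 vsN1). Qed.

Let rename_inj2 : {in G2.1 &, injective r}.
Proof.
move=> x y xG yG; rewrite !(hajos_rename_sym v1 v2 vs).
exact: (hajos_rename_inj v1N2 vsN2 xG yG).
Qed.

Lemma hajos_rename_cross x y :
  x \in G1.1 -> y \in G2.1 -> r x = r y -> (x == v1) && (y == v2).
Proof.
move=> xG yG; rewrite (rename1 xG) (rename2 yG).
case: eqVneq => [_|xv1]; case: eqVneq => [_|yv2] //=.
- by move=> vsy; move: vsN2; rewrite vsy !inE yv2 yG.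
- by move=> xvs; move: vsN1; rewrite -xvs !inE xv1 xG.
- by move=> xy; move: (disjointFr disjG xG); rewrite xy yG.
Qed.

Lemma notin_renamed2 x g : x \in G1.1 -> x != v1 -> g \subset G2.1 -> x \notin r @: g.
Proof.
move=> xG xv1 /subsetP gG; apply/negP => /imsetP [y yg xy].
suff: (x == v1) && (y == v2) by rewrite (negbTE xv1).
by apply: (hajos_rename_cross xG (gG y yg)); rewrite -xy rename_fixed1.
Qed.

Lemma notin_renamed1 y f : y \in G2.1 -> y != v2 -> f \subset G1.1 -> y \notin r @: f.
Proof.
move=> yG yv2 /subsetP fG; apply/negP => /imsetP [x xf yx].
suff: (x == v1) && (y == v2) by rewrite (negbTE yv2) andbF.
by apply: (hajos_rename_cross (fG x xf) yG); rewrite -yx rename_fixed2.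
Qed.

Lemma mem_renamed1 x f : f \subset G1.1 -> x \in G1.1 -> (r x \in r @: f) = (x \in f).
Proof.
move=> /subsetP fG xG; apply/imsetP/idP => [[y yf /(rename_inj1 xG (fG y yf)) -> //]|xf].
by exists x.
Qed.

Lemma renamed1_inj f g : f \subset G1.1 -> g \subset G1.1 -> r @: f = r @: g -> f = g.
Proof.
move=> fG gG fg; apply/setP => x; have [xG|xN] := boolP (x \in G1.1).
  by rewrite -(mem_renamed1 fG xG) fg mem_renamed1.
by rewrite (contraNF (subsetP fG x)) ?(contraNF (subsetP gG x)).
Qed.

Lemma renamed1_neq_renamed2 f g : f \subset G1.1 -> g \in G2.2 -> r @: f != r @: g.
Proof.
move=> fG gG; have [w wg wv2] := edge_other_vertex v2 hyp2 gG.
have wG := subsetP (sub2 gG) w wg.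
by apply/eqP => fg; move: (notin_renamed1 wG wv2 fG); rewrite fg -{1}(rename_fixed2 wG wv2) imset_f.
Qed.

Lemma hajos_edge_mem1 x : x \in e1 -> x != v1 -> x \in estar.
Proof.
move=> xe xv1; apply: mem_hajos_edge xv1 _; first by rewrite inE xe.
by apply: contraNneq v2N1 => <-; apply: subsetP (sub1 e1G) x xe.
Qed.

Lemma hajos_edge_mem2 y : y \in e2 -> y != v2 -> y \in estar.
Proof.
move=> ye yv2; apply: mem_hajos_edge _ _ yv2; first by rewrite inE ye orbT.
by apply: contraNneq v1N2 => <-; apply: subsetP (sub2 e2G) y ye.
Qed.

Lemma renamed1_neq_hajos_edge f : f \subset G1.1 -> r @: f != estar.
Proof.
move=> fG; have [y ye yv2] := edge_other_vertex v2 hyp2 e2G.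
apply/eqP => fe; move: (notin_renamed1 (subsetP (sub2 e2G) y ye) yv2 fG).
by rewrite fe hajos_edge_mem2.
Qed.

Lemma renamed2_neq_hajos_edge g : g \subset G2.1 -> r @: g != estar.
Proof.
move=> gG; have [x xe xv1] := edge_other_vertex v1 hyp1 e1G.
apply/eqP => ge; move: (notin_renamed2 (subsetP (sub1 e1G) x xe) xv1 gG).
by rewrite ge hajos_edge_mem1.
Qed.

Lemma hajos_join_hypergraph : is_hypergraph J.
Proof.
suff edgeJ e : e \in J.2 -> e \subset J.1 /\ 1 < #|e| by split=> e /edgeJ [].
have renamed_ok (G : hgraph T) f : is_hypergraph G -> f \in G.2 ->
    {subset G.1 <= G1.1 :|: G2.1} -> {in G.1 &, injective r} ->
    r @: f \subset J.1 /\ 1 < #|r @: f|.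
  move=> [subG big] fG GG injG; have /subsetP fsub := subG f fG; split.
    by apply/subsetP => _ /imsetP [x xf ->]; apply/hajos_rename_in_join/GG/fsub.
  by rewrite card_in_imset ?big //; apply: sub_in2 injG.
case/hajos_join_edgeP => [[f /setD1P [_ fG] ->]|[f /setD1P [_ fG] ->]|->].
- by apply: renamed_ok hyp1 fG _ rename_inj1 => x xG; rewrite inE xG.
- by apply: renamed_ok hyp2 fG _ rename_inj2 => x xG; rewrite inE xG orbT.
split.
  apply/subsetP => z /hajos_edge_cases [->|[ze zv1 zv2]].
    by rewrite hajos_join_vertices setU11.
  rewrite hajos_join_vertices !inE zv1 zv2 /=.
  by case/setUP: ze => ze; rewrite ?(subsetP (sub1 e1G) z ze) ?(subsetP (sub2 e2G) z ze) ?orbT.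
have [x xe xv1] := edge_other_vertex v1 hyp1 e1G.
have [y ye yv2] := edge_other_vertex v2 hyp2 e2G.
have xy : x != y.
  apply: contraTneq (subsetP (sub1 e1G) x xe) => ->.
  by rewrite (disjointFl disjG) ?(subsetP (sub2 e2G)).
have : #|[set x; y]| <= #|estar|.
  apply/subset_leq_card/subsetP => z; rewrite !inE => /orP [] /eqP ->.
    exact: hajos_edge_mem1.
  exact: hajos_edge_mem2.
by rewrite cards2 xy.
Qed.

(* The identified vertex [vs] gets the common color of [v1] and [v2]. *)
Definition hajos_glue (c1 c2 : T -> nat) x :=
  if x \in G1.1 :\ v1 then c1 x else if x \in G2.1 :\ v2 then c2 x else c1 v1.

Section Glue.
Context {c1 c2 : T -> nat}.
Hypothesis c12 : c1 v1 = c2 v2.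
Local Notation c := (hajos_glue c1 c2).

Lemma hajos_glue_rename1 x : x \in G1.1 -> c (r x) = c1 x.
Proof.
move=> xG; rewrite rename1 // /hajos_glue; case: eqVneq => [->|xv1].
  by rewrite (negbTE vsN1) (negbTE vsN2).
by rewrite !inE xv1 xG.
Qed.

Lemma hajos_glue_rename2 x : x \in G2.1 -> c (r x) = c2 x.
Proof.
move=> xG; rewrite rename2 // /hajos_glue; case: eqVneq => [->|xv2].
  by rewrite (negbTE vsN1) (negbTE vsN2).
by rewrite !inE (disjointFl disjG xG) andbF xv2 xG.
Qed.

Lemma hajos_glue_ltn k :
  {in G1.1, forall x, c1 x < k} -> {in G2.1, forall x, c2 x < k} -> forall x, c x < k.
Proof.
move=> c1k c2k x; rewrite /hajos_glue.
case: ifP => [/setD1P [_ /c1k] //|_]; case: ifP => [/setD1P [_ /c2k] //|_].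
exact: c1k.
Qed.

Lemma bichromatic_glue1 f : f \in G1.2 -> bichromatic c1 f -> bichromatic c (r @: f).
Proof.
move=> fG; rewrite bichromatic_imset (eq_in_bichromatic (c' := c1)) // => x xf.
exact/hajos_glue_rename1/(subsetP (sub1 fG)).
Qed.

Lemma bichromatic_glue2 f : f \in G2.2 -> bichromatic c2 f -> bichromatic c (r @: f).
Proof.
move=> fG; rewrite bichromatic_imset (eq_in_bichromatic (c' := c2)) // => x xf.
exact/hajos_glue_rename2/(subsetP (sub2 fG)).
Qed.

Lemma bichromatic_glue_hajos_edge x y :
  x \in e1 -> x != v1 -> y \in e2 -> y != v2 -> c1 x != c2 y -> bichromatic c estar.
Proof.
move=> xe xv1 ye yv2 cxy; apply/bichromaticP; exists x, y.
rewrite hajos_edge_mem1 // hajos_edge_mem2 //; split=> //.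
have xG := subsetP (sub1 e1G) x xe; have yG := subsetP (sub2 e2G) y ye.
by rewrite -(rename_fixed1 xG xv1) -(rename_fixed2 yG yv2) hajos_glue_rename1 // hajos_glue_rename2.
Qed.
End Glue.

Lemma pullback_ltn1 k c : {in J.1, forall x, c x < k} -> {in G1.1, forall x, c (r x) < k}.
Proof. by move=> cb x xG; apply/cb/hajos_rename_in_join; rewrite inE xG. Qed.

Lemma pullback_ltn2 k c : {in J.1, forall x, c x < k} -> {in G2.1, forall x, c (r x) < k}.
Proof. by move=> cb x xG; apply/cb/hajos_rename_in_join; rewrite inE xG orbT. Qed.

(* Every vertex of the new edge is [vs] or fixed by [r], so it takes the color of [r v1] or
   of [r v2], both equal to that of [vs]. *)
Lemma hajos_edge_monochromatic c :
  ~~ bichromatic (c \o r) e1 -> ~~ bichromatic (c \o r) e2 -> ~~ bichromatic c estar.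
Proof.
move=> mono1 mono2; have c_vs z : z \in estar -> c z = c vs.
  case/hajos_edge_cases => [-> //|[/setUP [] ze zv1 zv2]]; rewrite -(hajos_rename_id vs zv1 zv2).
    by rewrite -{2}(hajos_rename_v1 v1 v2 vs); exact: (not_bichromatic_eq mono1 ze v1e1).
  by rewrite -{2}(hajos_rename_v2 v1 v2 vs); exact: (not_bichromatic_eq mono2 ze v2e2).
by apply/negP => /bichromaticP [x [y [xe ye]]]; rewrite !c_vs ?eqxx.
Qed.

Lemma pullback_bichromatic_e1 k c :
  ~ colorable G2 k -> {in J.1, forall x, c x < k} ->
  {in G2.2 :\ e2, forall g, bichromatic c (r @: g)} -> bichromatic c estar ->
  bichromatic (c \o r) e1.
Proof.
move=> nc2 cb c2 cstar; apply: contraTT cstar => mono1.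
apply: hajos_edge_monochromatic mono1 (deleted_edge_monochromatic nc2 _).
by split=> [|g gG]; [apply: pullback_ltn2 | rewrite -bichromatic_imset c2].
Qed.

Lemma hajos_join_noncolorable k : ~ colorable G1 k -> ~ colorable G2 k -> ~ colorable J k.
Proof.
move=> nc1 nc2 /colorableP [c [cb ce]]; apply: nc1; apply/colorableP; exists (c \o r).
split=> [|f fG]; first exact: pullback_ltn1.
have [->|fe1] := eqVneq f e1.
  apply: pullback_bichromatic_e1 nc2 cb _ (ce _ hajos_edge_in_join) => g gG.
  exact/ce/renamed_edge2_in_join.
by rewrite -bichromatic_imset; apply/ce/renamed_edge1_in_join; rewrite !inE fe1.
Qed.

Lemma colorable_hajos_join_del_renamed1 k f :
  ~ colorable G2 k -> edge_critical G1 k -> edge_critical G2 k -> f \in G1.2 -> f != e1 ->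
  colorable (del_edge J (r @: f)) k.
Proof.
move=> nc2 ec1 ec2 fG fe1.
have /colorableP [c1 col1] := ec1 f fG; have /colorableP [c2 col2] := ec2 e2 e2G.
have e1f : e1 \in (del_edge G1 f).2 by rewrite !inE eq_sym fe1 e1G.
have [x xe cx] := bichromatic_neq v1 (col1.2 e1 e1f).
have xv1 : x != v1 by apply: contraNneq cx => ->.
have col2' := coloring_at col2 v2G2 (col1.1 v1 v1G1).
have c12 : c1 v1 = (cswap (c2 v2) (c1 v1) \o c2) v2 by rewrite /= cswapL.
have mono2 := deleted_edge_monochromatic nc2 col2'.
have [y ye yv2] := edge_other_vertex v2 hyp2 e2G.
apply/colorableP; exists (hajos_glue c1 (cswap (c2 v2) (c1 v1) \o c2)).
split=> [z _|e /setD1P [ef eJ]]; first exact: hajos_glue_ltn col1.1 col2'.1 z.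
case/hajos_join_edgeP: eJ ef => [[g /setD1P [ge1 gG] ->]|[g /setD1P [ge2 gG] ->]|->] ef.
- apply: (bichromatic_glue1 gG); apply: col1.2.
  by rewrite !inE gG andbT; apply: contraNneq ef => ->.
- by apply: (bichromatic_glue2 c12 gG); apply: col2'.2; rewrite !inE ge2 gG.
- apply: (bichromatic_glue_hajos_edge c12 xe xv1 ye yv2).
  by rewrite (not_bichromatic_eq mono2 ye v2e2) -c12.
Qed.

Lemma colorable_hajos_join_del_hajos_edge k :
  edge_critical G1 k -> edge_critical G2 k -> colorable (del_edge J estar) k.
Proof.
move=> ec1 ec2; have /colorableP [c1 col1] := ec1 e1 e1G.
have /colorableP [c2 col2] := ec2 e2 e2G.
have col2' := coloring_at col2 v2G2 (col1.1 v1 v1G1).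
have c12 : c1 v1 = (cswap (c2 v2) (c1 v1) \o c2) v2 by rewrite /= cswapL.
apply/colorableP; exists (hajos_glue c1 (cswap (c2 v2) (c1 v1) \o c2)).
split=> [z _|e /setD1P [ef eJ]]; first exact: hajos_glue_ltn col1.1 col2'.1 z.
case/hajos_join_edgeP: eJ ef => [[g gG ->]|[g gG ->]|->] ef; last by rewrite eqxx in ef.
- have [_ gG1] := setD1P gG; apply: (bichromatic_glue1 gG1); exact: col1.2.
- have [_ gG2] := setD1P gG; apply: (bichromatic_glue2 c12 gG2); exact: col2'.2.
Qed.

Lemma hajos_join_covers1 x :
  no_isolated G1 -> x \in G1.1 -> x != v1 -> exists2 e, e \in J.2 & x \in e.
Proof.
move=> niso xG xv1; have [f fG xf] := niso x xG.
have [fe1|fe1] := eqVneq f e1.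
  exists estar; first exact: hajos_edge_in_join.
  by apply: (hajos_edge_mem1 _ xv1); rewrite -fe1.
exists (r @: f); first by apply: renamed_edge1_in_join; rewrite !inE fe1.
by rewrite -(rename_fixed1 xG xv1) mem_renamed1 ?sub1.
Qed.

Lemma hajos_join_covers_vs :
  (exists2 f, f \in G1.2 & (f != e1) && (v1 \in f)) -> exists2 e, e \in J.2 & vs \in e.
Proof.
move=> [f fG /andP [fe1 v1f]]; exists (r @: f).
  by apply: renamed_edge1_in_join; rewrite !inE fe1.
by rewrite -{1}(hajos_rename_v1 v1 v2 vs) imset_f.
Qed.

(* The hypothesis [2 < k] leaves room for a third color at the end of the new edge. *)
Lemma noncolorable1_of_hajos_join k :
  2 < k -> ~ colorable J k -> colorable (del_edge J estar) k -> ~ colorable G1 k.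
Proof.
move=> k_gt2 ncJ /colorableP [c [cb ce]] /colorableP [c1 col1].
have [x xe cx] := bichromatic_neq v1 (col1.2 e1 e1G).
have xv1 : x != v1 by apply: contraNneq cx => ->.
have c1v1x : c1 v1 != c1 x by rewrite eq_sym.
have [y ye yv2] := edge_other_vertex v2 hyp2 e2G.
have [h [inj_h hk hv1 hx]] := exists_recoloring (c (r y)) k_gt2 (col1.1 v1 v1G1)
  (col1.1 x (subsetP (sub1 e1G) x xe)) (cb vs (setU11 _ _)) c1v1x.
have col1' := coloring_recolor inj_h hk col1.
have c12 : (h \o c1) v1 = (c \o r) v2 by rewrite /= hv1 hajos_rename_v2.
apply: ncJ; apply/colorableP; exists (hajos_glue (h \o c1) (c \o r)).
split=> [z _|e]; first exact: hajos_glue_ltn col1'.1 (pullback_ltn2 cb) z.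
case/hajos_join_edgeP => [[g /setD1P [_ gG] ->]|[g /setD1P [ge2 gG] ->]|->].
- exact: bichromatic_glue1 gG (col1'.2 g gG).
- apply: (bichromatic_glue2 c12 gG); rewrite -bichromatic_imset; apply: ce.
  by rewrite in_setD1 renamed2_neq_hajos_edge ?sub2 // renamed_edge2_in_join // !inE ge2.
- exact: (bichromatic_glue_hajos_edge c12 xe xv1 ye yv2 hx).
Qed.

Lemma edge_critical1_of_hajos_join k :
  ~ colorable G2 k -> edge_critical J k -> edge_critical G1 k.
Proof.
move=> nc2 ecJ f fG; have [->|fe1] := eqVneq f e1.
  have /colorableP [c [cb ce]] := ecJ _ hajos_edge_in_join.
  apply/colorableP; exists (c \o r); split=> [|g /setD1P [ge1 gG]]; first exact: pullback_ltn1.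
  rewrite -bichromatic_imset; apply: ce.
  by rewrite in_setD1 renamed1_neq_hajos_edge ?sub1 // renamed_edge1_in_join // !inE ge1.
have fJ : r @: f \in J.2 by apply: renamed_edge1_in_join; rewrite !inE fe1.
have /colorableP [c [cb ce]] := ecJ _ fJ.
apply/colorableP; exists (c \o r); split=> [|g /setD1P [gf gG]]; first exact: pullback_ltn1.
have [->|ge1] := eqVneq g e1.
  apply: pullback_bichromatic_e1 nc2 cb _ _ => [g' /setD1P [g'e2 g'G]|].
    apply: ce; rewrite in_setD1 eq_sym renamed1_neq_renamed2 ?sub1 //.
    by rewrite renamed_edge2_in_join // !inE g'e2.
  by apply: ce; rewrite in_setD1 hajos_edge_in_join eq_sym renamed1_neq_hajos_edge ?sub1.
rewrite -bichromatic_imset; apply: ce; rewrite in_setD1 renamed_edge1_in_join ?andbT.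
  by apply: contra gf => /eqP /renamed1_inj -> //; apply: sub1.
by rewrite !inE ge1.
Qed.

Lemma no_isolated1_of_hajos_join : no_isolated J -> no_isolated G1.
Proof.
move=> nisoJ x xG; have [->|xv1] := eqVneq x v1; first by exists e1.
have rx := rename_fixed1 xG xv1.
have xJ : x \in J.1 by rewrite -rx; apply: hajos_rename_in_join; rewrite inE xG.
have [e eJ xe] := nisoJ x xJ.
case/hajos_join_edgeP: eJ xe => [[g /setD1P [_ gG] ->]|[g /setD1P [_ gG] ->]|->] xe.
- by exists g; rewrite // -(mem_renamed1 (sub1 gG) xG) rx.
- by rewrite (negbTE (notin_renamed2 xG xv1 (sub2 gG))) in xe.
case/hajos_edge_cases: xe => [xvs|[/setUP [xe|xe] _ _]].
- by move: vsN1; rewrite -xvs !inE xv1 xG.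
- by exists e1.
- by move: (disjointFr disjG xG); rewrite (subsetP (sub2 e2G) x xe).
Qed.
End HajosData.

Lemma critical_hajos_join (T : finType) (G1 G2 : hgraph T) v1 v2 vs e1 e2 b k :
  hajos_data G1 G2 v1 v2 vs e1 e2 -> 1 < k -> critical G1 k -> critical G2 k ->
  critical (hajos_join G1 G2 v1 v2 vs e1 e2 b) k.
Proof.
move=> D k_gt1 crit1 crit2; have D' := hajos_data_sym D; have k_gt0 := ltnW k_gt1.
have [hyp1 [hyp2 [_ [e1G [_ [v1e1 _]]]]]] := D.
have [nc1 ec1 ni1] := (critical_char hyp1 k_gt0).1 crit1.
have [nc2 ec2 ni2] := (critical_char hyp2 k_gt0).1 crit2.
apply/(critical_char (hajos_join_hypergraph b D) k_gt0); split.
- exact: hajos_join_noncolorable.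
- move=> e /hajos_join_edgeP [[f /setD1P [fe1 fG] ->]|[f /setD1P [fe2 fG] ->]|->].
  + exact: colorable_hajos_join_del_renamed1.
  + rewrite hajos_join_sym (eq_imset _ (hajos_rename_sym v1 v2 vs)).
    exact: colorable_hajos_join_del_renamed1.
  + exact: colorable_hajos_join_del_hajos_edge.
- move=> x; rewrite hajos_join_vertices => /setU1P [->|/setUP [/setD1P [xv1 xG]|/setD1P [xv2 xG]]].
  + apply: hajos_join_covers_vs.
    exact: critical_vertex_in_two_edges hyp1 k_gt1 crit1 e1G v1e1.
  + exact: hajos_join_covers1.
  + by rewrite hajos_join_sym; apply: (hajos_join_covers1 b D' ni2 xG xv2).
Qed.

Lemma critical1_of_hajos_join (T : finType) (G1 G2 : hgraph T) v1 v2 vs e1 e2 b k :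
  hajos_data G1 G2 v1 v2 vs e1 e2 -> 2 < k ->
  critical (hajos_join G1 G2 v1 v2 vs e1 e2 b) k -> critical G1 k.
Proof.
move=> D k_gt2 critJ; have k_gt0 : 0 < k by apply: leq_trans k_gt2.
have [ncJ ecJ niJ] := (critical_char (hajos_join_hypergraph b D) k_gt0).1 critJ.
have nc2 : ~ colorable G2 k.
  apply: (noncolorable1_of_hajos_join (b := b) (hajos_data_sym D) k_gt2).
    by rewrite -hajos_join_sym.
  by rewrite -hajos_join_sym -hajos_edge_sym; apply: ecJ hajos_edge_in_join.
apply/(critical_char D.1 k_gt0); split.
- exact: noncolorable1_of_hajos_join k_gt2 ncJ (ecJ _ hajos_edge_in_join).
- exact: edge_critical1_of_hajos_join nc2 ecJ.
- exact: no_isolated1_of_hajos_join niJ.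
Qed.

Theorem theorem9 (T : finType) (G1 G2 : hgraph T) (v1 v2 vs : T)
    (e1 e2 : {set T}) (b : bool) (k : nat) :
  hajos_data G1 G2 v1 v2 vs e1 e2 -> 2 <= k ->
  (critical G1 k -> critical G2 k -> critical (hajos_join G1 G2 v1 v2 vs e1 e2 b) k) /\
  (3 <= k -> critical (hajos_join G1 G2 v1 v2 vs e1 e2 b) k ->
     critical G1 k /\ critical G2 k).
Proof.
move=> D k_gt1; split; first exact: critical_hajos_join.
move=> k_gt2 critJ; split; first exact: critical1_of_hajos_join critJ.
by apply: (critical1_of_hajos_join (b := b) (hajos_data_sym D) k_gt2); rewrite -hajos_join_sym.
Qed.
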